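(* Let $n\geq 3$ and $m\geq 1$ be integers. Identify $\Delta_m^{3,2}=\mathrm{VR}(\{0,\ldots,m\}^3;2)$ with the subcomplex of $\Delta_m^{n,2}=\mathrm{VR}(\{0,\ldots,m\}^n;2)$ spanned by the vertices of the form $(v_1,v_2,v_3,0,\ldots,0)$. Then there exists a retraction $\Delta_m^{n,2}\to\Delta_m^{3,2}$.
   Context: $\{0,\ldots,m\}^k\subseteq\mathbb{Z}^k$ carries the Manhattan metric $d(x,y)=\sum_i |x_i-y_i|$. For a metric space $X$ and $r\geq 0$, $\mathrm{VR}(X;r)$ is the simplicial complex on $X$ whose simplices are the finite subsets of diameter at most $r$. *)

From mathcomp Require Import all_boot.
Set Implicit Arguments. Unset Strict Implicit. Unset Printing Implicit Defensive.

Definition grid (k m : nat) := {ffun 'I_k -> 'I_m.+1}.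

Definition manhattan (k m : nat) (x y : grid k m) : nat :=
  \sum_(i < k) ((x i - y i) + (y i - x i))%N.

Definition VR_simplex (k m r : nat) (s : {set grid k m}) : bool :=
  [forall x in s, forall y in s, manhattan x y <= r].

Definition VR_simplicial (k m r k' m' r' : nat) (f : grid k m -> grid k' m') : Prop :=
  forall s : {set grid k m}, VR_simplex r s -> VR_simplex r' (f @: s).

Definition embed3 (n m : nat) (v : grid 3 m) : grid n m :=
  [ffun i : 'I_n => if (i < 3)%N then v (inord i) else ord0].

From mathcomp Require Import all_boot.

(* Forgetting all but the first three coordinates is a retraction onto the
   embedded copy of the 3-dimensional grid, and it can only shrink Manhattan
   distances, so it maps sets of diameter at most 2 to sets of diameter at
   most 2. *)

Definition proj_grid {k n m : nat} (hkn : (k <= n)%N) (x : grid n m) : grid k m :=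
  [ffun i => x (widen_ord hkn i)].

Lemma leq_sum_injective {I J : finType} (h : I -> J) (F : J -> nat) :
  injective h -> (\sum_(i : I) F (h i) <= \sum_(j : J) F j)%N.
Proof.
move=> inj_h; rewrite -(big_imset F (in2W inj_h)) /=.
by rewrite [X in (_ <= X)%N](bigID (mem (h @: I))) leq_addr.
Qed.

Lemma manhattan_proj_grid {k n m : nat} (hkn : (k <= n)%N) (x y : grid n m) :
  (manhattan (proj_grid hkn x) (proj_grid hkn y) <= manhattan x y)%N.
Proof.
rewrite /manhattan; under eq_bigr => i _ do rewrite !ffunE.
apply: (leq_sum_injective _ (fun j => x j - y j + (y j - x j))%N).
by move=> i j /(congr1 val) /= /val_inj.
Qed.

Lemma nonexpansive_VR_simplicial {k m k' m' : nat} (r : nat) (f : grid k m -> grid k' m') :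
  (forall x y, manhattan (f x) (f y) <= manhattan x y)%N -> VR_simplicial r r f.
Proof.
move=> f_nonexp s /forall_inP diam_s; apply/forall_inP => _ /imsetP [x xs ->].
apply/forall_inP => _ /imsetP [y ys ->].
exact: leq_trans (f_nonexp x y) (forall_inP (diam_s x xs) y ys).
Qed.

Lemma proj_grid_embed3 {n m : nat} (hn : (3 <= n)%N) (v : grid 3 m) :
  proj_grid hn (embed3 n v) = v.
Proof.
apply/ffunP => i; rewrite !ffunE /= ltn_ord.
by congr (v _); apply: val_inj; rewrite /= inordK.
Qed.

Theorem proposition4p12 (n m : nat) (hn : (3 <= n)%N) (hm : (1 <= m)%N) :
  exists f : grid n m -> grid 3 m,
    VR_simplicial 2 2 f /\ (forall v : grid 3 m, f (embed3 n v) = v).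
Proof.
exists (proj_grid hn); split; last exact: proj_grid_embed3.
exact/nonexpansive_VR_simplicial/manhattan_proj_grid.
Qed.
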